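(* Let $(X,b,m)$ be a connected weighted graph satisfying conditions (B) and (M), and put $b_{max}:=\sup_{x,y\in X} b(x,y)$ (which satisfies $b_{max}\le \delta\, m_{max}<\infty$). Then: (a) For any path $\gamma=(x_0,\dots,x_k)$ we have $L(\gamma)\ge b_{max}^{-1}\, k$, where $k$ is the number of edges of $\gamma$. In particular, any two different points $x,y\in X$ satisfy $d(x,y)\ge \frac{1}{b_{max}}$. (b) The metric space $(X,d)$ is locally compact and complete. (c) For any $r\ge 0$ and $x\in X$, $$\#B_r(x)\le \left(r\cdot\delta\cdot m_{max}\right)^{r\cdot b_{max}}+1 .$$ In particular every closed ball is finite, and for any $r\ge 0$ one has $\sup_{x\in X} m(B_r(x))<\infty$. (d) $(X,d)$ is geodesic: for any $x,y\in X$ there exists a path $\gamma$ from $x$ to $y$ with $L(\gamma)=d(x,y)$.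
   Context: A weighted graph $(X,b,m)$ consists of a countable set $X$, a symmetric function $b:X\times X\to[0,\infty)$ with $b(x,x)=0$ and $\sum_{y\in X}b(x,y)<\infty$ for all $x\in X$, and a function $m:X\to(0,\infty)$; for $A\subset X$ put $m(A):=\sum_{x\in A}m(x)$. Condition (B): $\delta:=\sup_{x\in X}\frac{1}{m(x)}\sum_{y\in X}b(x,y)<\infty$. Condition (M): $m_{max}:=\sup_{x\in X}m(x)<\infty$. A path from $x_0$ to $x_k$ is a finite sequence $\gamma=(x_0,x_1,\dots,x_k)$ with $b(x_j,x_{j+1})>0$ for $j=0,\dots,k-1$ (its $k$ edges are the pairs $\{x_j,x_{j+1}\}$); trivial paths $(x)$ from $x$ to $x$ are allowed and have length $0$. The length of $\gamma$ is $L(\gamma):=\sum_{j=0}^{k-1}\frac{1}{b(x_j,x_{j+1})}$. The graph is connected if any two points are joined by a path. The distance is $d(x,y):=\inf\{L(\gamma):\gamma \text{ a path from } x \text{ to } y\}$, which is a metric on $X$. $B_r(x):=\{y\in X: d(x,y)\le r\}$ denotes the closed ball. *)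

From Stdlib Require Import List.
From HB Require Import structures.
From mathcomp Require Import all_boot all_order all_algebra.
From mathcomp Require Import all_classical all_reals all_analysis.
Set Implicit Arguments. Unset Strict Implicit. Unset Printing Implicit Defensive.
Import Order.TTheory GRing.Theory Num.Theory.
Local Open Scope classical_set_scope.
Local Open Scope ring_scope.

Section WeightedGraph.
Variables (R : realType) (X : countType) (b : X -> X -> R) (m : X -> R).

Definition weighted_graph : Prop :=
  [/\ (forall x y, b x y = b y x),
      (forall x y, 0 <= b x y),
      (forall x, b x x = 0),
      (forall x, (\esum_(y in [set: X]) (b x y)%:E < +oo)%E)
    & (forall x, 0 < m x)].

Definition delta_e : \bar R :=
  ereal_sup [set ((m x)^-1)%:E * \esum_(y in [set: X]) (b x y)%:E | x in [set: X]]%E.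

Definition mmax_e : \bar R := ereal_sup [set (m x)%:E | x in [set: X]].

Definition bmax_e : \bar R := ereal_sup [set (b p.1 p.2)%:E | p in [set: X * X]].

Definition cond_B : Prop := (delta_e < +oo)%E.
Definition cond_M : Prop := (mmax_e < +oo)%E.

Definition delta : R := fine delta_e.
Definition mmax : R := fine mmax_e.
Definition bmax : R := fine bmax_e.

(* A path from x0 is x0 :: s, consecutive vertices joined by an edge (b > 0);
   it ends at [last x0 s] and has [size s] edges. *)
Definition is_path (x0 : X) (s : seq X) : bool := path (fun u v => 0 < b u v) x0 s.

Fixpoint plength (x0 : X) (s : seq X) : R :=
  match s with
  | [::] => 0
  | y :: s' => (b x0 y)^-1 + plength y s'
  end.

Definition connected_graph : Prop :=
  forall x y, exists s, is_path x s /\ last x s = y.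

Definition dist (x y : X) : R :=
  inf [set plength x s | s in [set s | is_path x s /\ last x s = y]].

Definition cball (x : X) (r : R) : set X := [set y | dist x y <= r].
Definition oball (x : X) (r : R) : set X := [set y | dist x y < r].

Definition d_open (U : set X) : Prop :=
  forall y, U y -> exists2 e : R, 0 < e & oball y e `<=` U.

Definition d_compact (K : set X) : Prop :=
  forall (I : Type) (U : I -> set X),
    (forall i, d_open (U i)) -> K `<=` \bigcup_i U i ->
    exists s : seq I, K `<=` [set z | exists2 i, In i s & U i z].

Definition d_locally_compact : Prop :=
  forall x, exists K : set X, (exists2 e : R, 0 < e & oball x e `<=` K) /\ d_compact K.

Definition d_cauchy (u : nat -> X) : Prop :=
  forall e : R, 0 < e -> exists N, forall n k, (N <= n)%N -> (N <= k)%N -> dist (u n) (u k) < e.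

Definition d_converges (u : nat -> X) (l : X) : Prop :=
  forall e : R, 0 < e -> exists N, forall n, (N <= n)%N -> dist (u n) l < e.

Definition d_complete : Prop :=
  forall u : nat -> X, d_cauchy u -> exists l, d_converges u l.

End WeightedGraph.

(* Every edge weight is at most [b_max <= delta m_max], so a path with [k] edges
   has length at least [k / b_max]: distinct points are uniformly separated, which
   gives (a) and (b).  For (c) and (d) one counts the paths from [x] of length at
   most [r].  By the AM-GM inequality a path with [k] edges and length [<= r]
   satisfies [k^k <= r^k * (product of its edge weights)], while the sum of these
   products over all [k]-edge paths from [x] is at most [(delta m_max)^k], as the
   weights of the edges leaving a vertex [y] sum to at most [delta m(y)].  Hence
   there are at most [1 + sum_(1 <= k <= r b_max) (r delta m_max)^k / k^k
   <= (r delta m_max)^(r b_max) + 1] such paths.  A shortest path among the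
   finitely many paths from [x] to [y] no longer than a given one realizes
   [d(x, y)], and choosing such a geodesic for every [y] in [B_r(x)] injects the
   ball into the paths of length [<= r]. *)

From HB Require Import structures.
From mathcomp Require Import all_boot all_order all_algebra.
From mathcomp Require Import all_classical all_reals all_analysis.
From mathcomp Require Import lra.
Set Implicit Arguments. Unset Strict Implicit. Unset Printing Implicit Defensive.
Import Order.TTheory GRing.Theory Num.Theory.
Local Open Scope classical_set_scope.
Local Open Scope ring_scope.

Lemma AGM_inv_sum (R : realFieldType) (l : seq R) (r : R) :
  all (fun v => 0 < v) l -> \sum_(v <- l) v^-1 <= r ->
  (size l)%:R ^+ size l <= r ^+ size l * \prod_(v <- l) v.
Proof.
move=> l_gt0 sum_le; set n := size l.
have inv_ge0 (i : 'I_n) : 0 <= (nth 1 l i)^-1.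
  by rewrite invr_ge0 ltW // (allP l_gt0) // mem_nth.
have cardT_n : #|(predT : {pred 'I_n})| = n by rewrite cardT size_enum_ord.
have := (leif_AGM_scaled (A := predT) (E := fun i : 'I_n => (nth 1 l i)^-1)
  (fun i _ => mulrn_wge0 _ (inv_ge0 i))).1; rewrite cardT_n.
have -> : \prod_(i in (predT : {pred 'I_n})) ((nth 1 l i)^-1 *+ n)
    = n%:R ^+ n * (\prod_(v <- l) v)^-1.
  rewrite (big_nth 1) big_mkord -prodfV -[in RHS]cardT_n -prodr_const -big_split /=.
  by apply: eq_bigr => i _; rewrite cardT_n mulr_natl.
rewrite [\sum_(i in _) _](_ : _ = \sum_(v <- l) v^-1); last first.
  rewrite (big_nth 1) big_mkord; exact: eq_bigl.
have prod_gt0 : 0 < \prod_(v <- l) v by rewrite big_seq prodr_gt0 // => v /(allP l_gt0).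
move=> AGM; rewrite -ler_pdivrMr //; apply: le_trans AGM _.
have sum_ge0 : 0 <= \sum_(v <- l) v^-1.
  by rewrite big_seq sumr_ge0 // => v /(allP l_gt0) /ltW; rewrite invr_ge0.
by rewrite lerXn2r ?nnegrE //; exact: le_trans sum_le.
Qed.

Lemma big_fibers_seq (R : nmodType) (T U : eqType) (s : seq T) (h : T -> U) (F : T -> R) :
  \sum_(x <- s) F x = \sum_(u <- undup (map h s)) \sum_(x <- s | h x == u) F x.
Proof.
under [RHS]eq_bigr do rewrite big_mkcond.
rewrite exchange_big /=; apply: eq_big_seq => x xs.
rewrite -big_mkcond /= (big_rem (h x)) ?mem_undup ?map_f // eqxx big1_seq /= ?addr0 //.
by move=> u /andP[/eqP <-]; rewrite mem_rem_uniqF // undup_uniq.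
Qed.

Lemma size_eq_sum_count (T : Type) (f : T -> nat) (s : seq T) n :
  all (fun x => f x < n)%N s -> size s = (\sum_(k < n) count (fun x => f x == k) s)%N.
Proof.
elim: s => [|x s IH] /=; first by rewrite big1.
case/andP => fx_lt /IH ->; rewrite big_split /= -add1n; congr (_ + _)%N.
rewrite (bigD1 (Ordinal fx_lt)) //= eqxx big1 // => k.
by rewrite -val_eqE eq_sym /= => /negbTE ->.
Qed.

Lemma exists_uniq_enum_of_bounded (T : eqType) (A : set T) n :
  (forall s, uniq s -> (forall z, z \in s -> A z) -> (size s <= n)%N) ->
  exists s, uniq s /\ forall z, z \in s <-> A z.
Proof.
move=> bounded.
pose P k := `[< exists2 s, uniq s /\ size s = k & forall z, z \in s -> A z >].
have P0 : exists k, P k by exists 0%N; apply/asboolP; exists [::].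
have Pn k : P k -> (k <= n)%N by move=> /asboolP [s [us <-]]; exact: bounded.
case: (ex_maxnP P0 Pn) => _ /asboolP [s [us <-] sA] s_max.
exists s; split => // z; split => [/sA //|Az].
apply/negPn/negP => zs; suff /s_max : P (size (z :: s)) by rewrite ltnn.
apply/asboolP; exists (z :: s) => [|y]; first by rewrite /= zs.
by rewrite inE => /predU1P [->|/sA].
Qed.

Lemma exists_seq_argmin (R : realDomainType) (T : eqType) (f : T -> R) (s : seq T) x :
  x \in s -> exists2 y, y \in s & forall z, z \in s -> f y <= f z.
Proof.
move=> xs; have : s != [::] by case: s xs.
elim: s {x xs} => [|x [|x' s] IH] // _.
  by exists x; rewrite ?mem_head // => z; rewrite inE => /eqP ->.
have [y ys y_min] := IH isT.
have [fx_le|fy_lt] := leP (f x) (f y).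
  by exists x; rewrite ?mem_head // => z; rewrite inE => /predU1P [->|/y_min/(le_trans fx_le)].
exists y; first by rewrite in_cons ys orbT.
by move=> z; rewrite in_cons => /predU1P [->|/y_min //]; exact: ltW.
Qed.

(* Induction on [n]: a nonzero [c k] with [1 < k] forces [k <= D], hence
   [c k <= D ^+ k / 2] and [D ^+ k.-1 <= D ^+ k / k <= D ^+ k / 2]. *)
Lemma sum_le_expr (R : realFieldType) (D : R) (c : nat -> nat) n : 1 <= D ->
  (forall k, (0 < k)%N -> (c k)%:R * k%:R ^+ k <= D ^+ k) ->
  (\sum_(k < n) c k.+1)%:R <= D ^+ n.
Proof.
move=> D_ge1 c_le; have D_ge0 : 0 <= D by exact: le_trans D_ge1.
elim: n => [|[|n] IH]; first by rewrite big_ord0.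
  by rewrite big_ord1; have := c_le 1%N isT; rewrite expr1 mulr1.
rewrite big_ord_recr /= natrD.
have expr_le : D ^+ n.+1 <= D ^+ n.+2 by rewrite [leRHS]exprS ler_peMl ?exprn_ge0.
have [->|/negbTE c_neq0] := eqVneq (c n.+2) 0%N; first by rewrite addr0 (le_trans IH).
have c_ge1 : 1 <= (c n.+2)%:R :> R by rewrite ler1n lt0n c_neq0.
have pow_ge2 : 2 <= (n.+2)%:R ^+ n.+2 :> R.
  by apply: le_trans (ler_eXnr _ _); rewrite ?ler_nat ?ler1n.
have c_le2 : (c n.+2)%:R * 2 <= D ^+ n.+2.
  by apply: le_trans (c_le n.+2 isT); rewrite ler_wpM2l.
have n_le_D : (n.+2)%:R <= D.
  rewrite -(ler_pXn2r (isT : (0 < n.+2)%N)) ?nnegrE //.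
  by apply: le_trans (c_le n.+2 isT); rewrite ler_peMl ?exprn_ge0.
have : 2 * D ^+ n.+1 <= D ^+ n.+2.
  by rewrite [leRHS]exprS ler_wpM2r ?exprn_ge0 // (le_trans _ n_le_D) ?ler_nat.
lra.
Qed.

Lemma sum_le_powR (R : realType) (D t : R) (c : nat -> nat) n : 0 <= D -> n%:R <= t ->
  (forall k, (0 < k)%N -> (c k)%:R * k%:R ^+ k <= D ^+ k) ->
  (\sum_(k < n) c k.+1)%:R <= powR D t.
Proof.
move=> D_ge0 n_le c_le; have [D_ge1|D_lt1] := leP 1 D.
  by rewrite (le_trans (sum_le_expr n D_ge1 c_le)) // -powR_mulrn // ler_powR.
rewrite big1 ?powR_ge0 // => k _.
have D_pow_lt1 : D ^+ k.+1 < 1 by rewrite exprn_ilt1.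
have := le_lt_trans (c_le k.+1 isT) D_pow_lt1.
by rewrite -natrX -natrM ltrn1 ltnS leqn0 muln_eq0 expn_eq0 /= orbF => /eqP.
Qed.

Lemma ereal_sup_ubound_fine (R : realType) (A : set \bar R) (r : R) :
  A r%:E -> (ereal_sup A < +oo)%E -> r <= fine (ereal_sup A).
Proof.
by move=> /ereal_sup_ubound; case: (ereal_sup A) => [s| |] //=; rewrite lee_fin.
Qed.

Lemma fine_ereal_sup_ge0 (R : realType) (A : set \bar R) :
  (forall a, A a -> (0 <= a)%E) -> 0 <= fine (ereal_sup A).
Proof.
move=> A_ge0; have [->|/set0P [a Aa]] := eqVneq A set0; first by rewrite ereal_sup0.
exact/fine_ge0/(le_trans (A_ge0 a Aa))/ereal_sup_ubound.
Qed.

Lemma fine_le_EFin (R : numDomainType) (x : \bar R) (c : R) :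
  0 <= c -> (x <= c%:E)%E -> fine x <= c.
Proof. by case: x => [s| |] //=; rewrite lee_fin. Qed.

Section PathCounting.
Variables (R : realType) (X : countType) (b : X -> X -> R).
Hypothesis b_ge0 : forall x y, 0 <= b x y.

Lemma plength_ge0 x s : 0 <= plength b x s.
Proof. by elim: s x => [|y s IH] x //=; rewrite addr_ge0 // invr_ge0. Qed.

Fixpoint edge_weights (x : X) (s : seq X) : seq R :=
  if s is y :: s' then b x y :: edge_weights y s' else [::].

Lemma size_edge_weights x s : size (edge_weights x s) = size s.
Proof. by elim: s x => [|y s IH] x //=; rewrite IH. Qed.

Lemma plength_edge_weights x s : plength b x s = \sum_(v <- edge_weights x s) v^-1.
Proof. by elim: s x => [|y s IH] x /=; rewrite ?big_nil ?big_cons ?IH. Qed.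

Lemma path_edge_weights_gt0 x s : is_path b x s -> all (fun v => 0 < v) (edge_weights x s).
Proof. by elim: s x => [|y s IH] x //= /andP[-> /IH]. Qed.

Lemma path_AGM x s r : is_path b x s -> plength b x s <= r ->
  (size s)%:R ^+ size s <= r ^+ size s * \prod_(v <- edge_weights x s) v.
Proof.
move=> /path_edge_weights_gt0 w_gt0; rewrite plength_edge_weights -(size_edge_weights x).
exact: AGM_inv_sum.
Qed.

Lemma plength_ge_size C x s : (forall u v, b u v <= C) -> is_path b x s ->
  C^-1 * (size s)%:R <= plength b x s.
Proof.
move=> b_le; elim: s x => [|y s IH] x /=; first by rewrite mulr0.
case/andP => b_gt0 /IH; rewrite -addn1 natrD mulrDr mulr1 addrC; apply: lerD.
by rewrite lef_pV2 ?posrE // (lt_le_trans b_gt0).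
Qed.

Lemma dist_le_plength x y s : is_path b x s -> last x s = y -> dist b x y <= plength b x s.
Proof.
move=> s_path s_last; apply: ge_inf; last by exists s.
by exists 0 => _ [q _ <-]; exact: plength_ge0.
Qed.

Lemma le_dist x y c : (exists s, is_path b x s /\ last x s = y) ->
  (forall s, is_path b x s -> last x s = y -> c <= plength b x s) -> c <= dist b x y.
Proof.
move=> [s s_xy] c_le; apply: lb_le_inf; first by exists (plength b x s), s.
by move=> _ [q [q_path q_last] <-]; exact: c_le.
Qed.

Lemma dist_xx x : dist b x x = 0.
Proof.
apply/le_anti; rewrite (dist_le_plength (s := [::])) //=.
by apply: le_dist => [|s _ _]; [exists [::] | exact: plength_ge0].
Qed.

Definition uniformly_discrete : Prop :=
  exists2 e : R, 0 < e & forall x y, x <> y -> e <= dist b x y.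

Lemma uniformly_discrete_locally_compact : uniformly_discrete -> d_locally_compact b.
Proof.
move=> [e e_gt0 sep] x; exists [set x]; split.
  exists e => // y /= dxy_lt; apply: contrapT => /nesym /sep.
  by rewrite leNgt dxy_lt.
move=> I U _ cover; have [i _ Uix] := cover x erefl.
by exists [:: i] => z /= ->; exists i => //=; left.
Qed.

Lemma uniformly_discrete_complete : uniformly_discrete -> d_complete b.
Proof.
move=> [e e_gt0 sep] u /(_ e e_gt0) [N u_close]; exists (u N) => eps eps_gt0.
exists N => n n_ge; have [->|unN] := pselect (u n = u N); first by rewrite dist_xx.
by have := u_close n N n_ge (leqnn N); rewrite ltNge sep.
Qed.

Variables B S : R.
Hypothesis b_le_B : forall x y, b x y <= B.
Hypothesis row_sum_le : forall x W, uniq W -> \sum_(w <- W) b x w <= S.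

Lemma sum_prod_edge_weights_le k x P : uniq P ->
  (forall p, p \in P -> is_path b x p /\ size p = k) ->
  \sum_(p <- P) \prod_(v <- edge_weights x p) v <= S ^+ k.
Proof.
elim: k x P => [|k IH] x P uP P_k.
  have P_nil p : p \in P -> p = [::] by move=> /P_k [_ /size0nil].
  have P_sub : {subset P <= [:: [::]]} by move=> p /P_nil ->; exact: mem_head.
  rewrite (eq_big_seq (fun=> 1)) => [|p /P_nil ->]; last by rewrite big_nil.
  by rewrite big_const_seq count_predT iter_addr_0 expr0 lern1 (uniq_leq_size uP P_sub).
have S_ge0 : 0 <= S by have := row_sum_le x (isT : uniq [::]); rewrite big_nil.
rewrite (big_fibers_seq _ (head x)).
apply: (@le_trans _ _ (\sum_(w <- undup (map (head x) P)) b x w * S ^+ k)); last first.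
  by rewrite -mulr_suml exprS ler_wpM2r ?exprn_ge0 ?row_sum_le ?undup_uniq.
rewrite big_seq [leRHS]big_seq; apply: ler_sum => w _.
rewrite -big_filter; set Q := [seq p <- P | head x p == w].
have Q_cons p : p \in Q -> [/\ p = w :: behead p, is_path b w (behead p) & size (behead p) = k].
  by rewrite mem_filter => /andP[/eqP <- /P_k []]; case: p => //= y p /andP[_ ?] [].
rewrite (eq_big_seq (fun p => b x w * \prod_(v <- edge_weights w (behead p)) v)); last first.
  by move=> p /Q_cons [-> _ _]; rewrite /= big_cons.
rewrite -mulr_sumr ler_wpM2l // -(big_map behead predT (fun p => \prod_(v <- edge_weights w p) v)).
apply: IH => [|_ /mapP [p /Q_cons [_ ? ?] ->] //].
by rewrite map_inj_in_uniq ?filter_uniq // => p q /Q_cons [-> _ _] /Q_cons [-> _ _] /= ->.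
Qed.

Lemma count_paths_of_size_le x r k P : 0 <= r -> uniq P ->
  (forall p, p \in P -> is_path b x p /\ plength b x p <= r) ->
  (count (fun p => size p == k) P)%:R * k%:R ^+ k <= (r * S) ^+ k.
Proof.
move=> r_ge0 uP P_short; rewrite -size_filter; set Q := [seq p <- P | size p == k].
have Q_k p : p \in Q -> [/\ is_path b x p, plength b x p <= r & size p = k].
  by rewrite mem_filter => /andP[/eqP ? /P_short []].
rewrite -sum1_size natr_sum mulr_suml exprMn.
apply: (@le_trans _ _ (\sum_(p <- Q) r ^+ k * \prod_(v <- edge_weights x p) v)).
  rewrite big_seq [leRHS]big_seq; apply: ler_sum => p /Q_k [p_path p_len p_size].
  by rewrite mul1r -p_size path_AGM.
rewrite -mulr_sumr ler_wpM2l ?exprn_ge0 //.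
by apply: sum_prod_edge_weights_le; [exact: filter_uniq | move=> p /Q_k []].
Qed.

Lemma size_path_le x s r : is_path b x s -> plength b x s <= r -> (size s)%:R <= r * B.
Proof.
case: s => [|y s] s_path s_len.
  by rewrite mulr_ge0 // (le_trans (b_ge0 x x)).
have B_gt0 : 0 < B by apply: lt_le_trans (b_le_B x y); case/andP: s_path.
by rewrite mulrC -ler_pdivrMl // (le_trans (plength_ge_size b_le_B s_path)).
Qed.

Lemma count_paths_le x r P : 0 <= r -> uniq P ->
  (forall p, p \in P -> is_path b x p /\ plength b x p <= r) ->
  (size P)%:R <= powR (r * S) (r * B) + 1.
Proof.
move=> r_ge0 uP P_short.
have S_ge0 : 0 <= S by have := row_sum_le x (isT : uniq [::]); rewrite big_nil.
have rB_ge0 : 0 <= r * B by rewrite mulr_ge0 // (le_trans (b_ge0 x x)).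
have P_size : all (fun p => size p < (Num.truncn (r * B)).+1)%N P.
  by apply/allP => p /P_short [p_path p_len]; rewrite ltnS truncn_ge_nat // (size_path_le p_path).
rewrite (size_eq_sum_count P_size) big_ord_recl natrD addrC lerD //.
  apply: (sum_le_powR (c := fun k => count (fun p => size p == k) P)).
  - by rewrite mulr_ge0.
  - by rewrite -truncn_ge_nat.
  - move=> k _; exact: (count_paths_of_size_le k r_ge0 uP P_short).
by have := count_paths_of_size_le 0 r_ge0 uP P_short; rewrite !expr0 mulr1.
Qed.

Hypothesis connected : connected_graph b.

Lemma dist_ge_inv C x y : (forall u v, b u v <= C) -> x <> y -> C^-1 <= dist b x y.
Proof.
move=> b_le xy; apply: le_dist => [|[|z s] // s_path _]; first exact: connected.
apply: le_trans (plength_ge_size b_le s_path); rewrite ler_peMr ?ler1n //.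
by rewrite invr_ge0 (le_trans (b_ge0 x x)).
Qed.

Lemma uniformly_discrete_dist : uniformly_discrete.
Proof.
(* [`|B|] because without a vertex nothing forces [0 <= B]. *)
exists (`|B| + 1)^-1; first by rewrite invr_gt0 ltr_wpDl.
move=> x y; apply: dist_ge_inv => u v.
by rewrite (le_trans (b_le_B u v)) // (le_trans (ler_norm B)) // lerDl.
Qed.

Lemma geodesic x y : exists s,
  is_path b x s /\ last x s = y /\ plength b x s = dist b x y.
Proof.
have [p0 [p0_path p0_last]] := connected x y.
set L := plength b x p0.
pose short p := is_path b x p /\ last x p = y /\ plength b x p <= L.
have [Q [uQ Q_short]] : exists Q, uniq Q /\ forall p, p \in Q <-> short p.
  apply: (exists_uniq_enum_of_bounded (n := Num.truncn (powR (L * S) (L * B) + 1))).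
  move=> P uP P_short; rewrite truncn_ge_nat ?addr_ge0 ?powR_ge0 //.
  by apply: (count_paths_le (x := x) (plength_ge0 x p0) uP) => p /P_short [? [_ ?]].
have p0_Q : p0 \in Q by apply/Q_short.
have [q /Q_short [q_path [q_last _]] q_min] := exists_seq_argmin (plength b x) p0_Q.
exists q; do 2!split => //; apply/le_anti; rewrite dist_le_plength // andbT.
apply: le_dist => [|s s_path s_last]; first by exists p0.
have [s_short|/ltW L_lt] := leP (plength b x s) L; first by apply/q_min/Q_short.
exact: le_trans (q_min _ p0_Q) L_lt.
Qed.

Lemma cball_card_le x r Y : 0 <= r -> uniq Y -> (forall y, y \in Y -> cball b x r y) ->
  (size Y)%:R <= powR (r * S) (r * B) + 1.
Proof.
move=> r_ge0 uY Y_ball; have [g g_geo] := choice (geodesic x).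
rewrite -(size_map g); apply: (count_paths_le (x := x)) => //.
  rewrite map_inj_in_uniq // => y1 y2 _ _ g_eq.
  by have [_ [<- _]] := g_geo y1; rewrite g_eq; have [_ []] := g_geo y2.
move=> _ /mapP [y /Y_ball y_ball ->]; by have [? [_ ->]] := g_geo y.
Qed.

Lemma cball_enum x r : 0 <= r -> exists s : seq X, uniq s /\
  (forall y, y \in s <-> cball b x r y) /\ (size s)%:R <= powR (r * S) (r * B) + 1.
Proof.
move=> r_ge0; have [s [us s_ball]] : exists s, uniq s /\ forall y, y \in s <-> cball b x r y.
  apply: (exists_uniq_enum_of_bounded (n := Num.truncn (powR (r * S) (r * B) + 1))).
  by move=> Y uY Y_ball; rewrite truncn_ge_nat ?addr_ge0 ?powR_ge0 // (cball_card_le (x := x)).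
by exists s; do 2!split => //; apply: (cball_card_le (x := x)) => // y /s_ball.
Qed.

End PathCounting.

Section WeightedGraphBounds.
Variables (R : realType) (X : countType) (b : X -> X -> R) (m : X -> R).
Hypotheses (wg : weighted_graph b m) (cB : cond_B b m) (cM : cond_M m).

Lemma weighted_graph_b_ge0 x y : 0 <= b x y.
Proof. by case: wg. Qed.

Lemma m_le_mmax x : m x <= mmax m.
Proof. by apply: ereal_sup_ubound_fine => //; exists x. Qed.

Lemma mmax_ge0 : 0 <= mmax m.
Proof. by apply: fine_ereal_sup_ge0 => _ [x _ <-]; rewrite lee_fin ltW //; case: wg. Qed.

Lemma delta_ge0 : 0 <= delta b m.
Proof.
apply: fine_ereal_sup_ge0 => _ [x _ <-]; rewrite mule_ge0 ?esum_ge0 // => [|y _].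
  by rewrite lee_fin invr_ge0 ltW //; case: wg.
by rewrite lee_fin weighted_graph_b_ge0.
Qed.

Lemma row_esum_le x : (\esum_(y in [set: X]) (b x y)%:E <= (delta b m * m x)%:E)%E.
Proof.
case: wg => _ _ _ /(_ x) row_fin /(_ x) m_gt0.
move: row_fin; case E : (\esum_(y in [set: X]) (b x y)%:E) => [e| |] //= _; last exact: leNye.
rewrite lee_fin -ler_pdivrMr // mulrC; apply: ereal_sup_ubound_fine => //.
by exists x => //; rewrite E.
Qed.

Lemma sum_b_le x W : uniq W -> \sum_(w <- W) b x w <= delta b m * mmax m.
Proof.
move=> uW; apply: le_trans (ler_wpM2l delta_ge0 (m_le_mmax x)).
rewrite -lee_fin (le_trans _ (row_esum_le x)) // -sumEFin fsbig_seq //.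
by apply: esum_ge; exists [set` W] => //; split => //; exact: finite_seq.
Qed.

Lemma bmax_e_le : (bmax_e b <= (delta b m * mmax m)%:E)%E.
Proof.
apply: ge_ereal_sup => _ [[u v] _ <-].
by have := sum_b_le u (isT : uniq [:: v]); rewrite big_seq1 lee_fin.
Qed.

Lemma bmax_e_lt_pinfty : (bmax_e b < +oo)%E.
Proof. exact: le_lt_trans bmax_e_le (ltry _). Qed.

Lemma b_le_bmax u v : b u v <= bmax b.
Proof. by apply: ereal_sup_ubound_fine bmax_e_lt_pinfty; exists (u, v). Qed.

Lemma bmax_le : bmax b <= delta b m * mmax m.
Proof. by apply: fine_le_EFin bmax_e_le; rewrite mulr_ge0 ?delta_ge0 ?mmax_ge0. Qed.

Hypothesis connected : connected_graph b.

Lemma esum_cball_le x r : 0 <= r -> (\esum_(y in cball b x r) (m y)%:E <=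
  ((powR (r * (delta b m * mmax m)) (r * bmax b) + 1) * mmax m)%:E)%E.
Proof.
move=> r_ge0; have [s [us [s_ball s_size]]] :=
  cball_enum weighted_graph_b_ge0 b_le_bmax sum_b_le connected x r_ge0.
have -> : cball b x r = [set` s] by apply/seteqP; split => y /s_ball.
rewrite esum_fset; last 2 first.
- exact: finite_seq.
- by move=> y _; rewrite lee_fin ltW //; case: wg.
rewrite -fsbig_seq // sumEFin lee_fin (le_trans (ler_sum _ (fun y _ => m_le_mmax y))) //.
by rewrite big_const_seq count_predT iter_addr_0 -mulr_natl ler_wpM2r ?mmax_ge0.
Qed.

End WeightedGraphBounds.

Theorem proposition2p1 (R : realType) (X : countType) (b : X -> X -> R) (m : X -> R) :
  weighted_graph b m -> connected_graph b -> cond_B b m -> cond_M m ->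
  (* b_max <= delta * m_max < oo *)
  ((bmax_e b < +oo)%E /\ bmax b <= delta b m * mmax m) /\
  (* (a) *)
  ((forall (x0 : X) (s : seq X), is_path b x0 s ->
       (bmax b)^-1 * (size s)%:R <= plength b x0 s) /\
   (forall x y : X, x <> y -> 1 / bmax b <= dist b x y)) /\
  (* (b) *)
  (d_locally_compact b /\ d_complete b) /\
  (* (c) *)
  ((forall (r : R) (x : X), 0 <= r ->
      exists s : seq X, uniq s /\ (forall y, y \in s <-> cball b x r y) /\
        (size s)%:R <= powR (r * delta b m * mmax m) (r * bmax b) + 1) /\
   (forall r : R, 0 <= r -> exists M : R,
      forall x : X, (\esum_(y in cball b x r) (m y)%:E <= M%:E)%E)) /\
  (* (d) *)
  (forall x y : X, exists s : seq X,
      is_path b x s /\ last x s = y /\ plength b x s = dist b x y).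
Proof.
move=> wg connected cB cM.
have b_ge0 := weighted_graph_b_ge0 wg.
have b_le := b_le_bmax wg cB cM.
have row_le := sum_b_le wg cB cM.
have discrete := uniformly_discrete_dist b_ge0 b_le connected.
split; [split | split; [split | split; [split | split; [split | ]]]].
- exact: (bmax_e_lt_pinfty wg cB cM).
- exact: bmax_le.
- by move=> x s; exact: plength_ge_size.
- by move=> x y xy; rewrite div1r; exact: dist_ge_inv.
- exact: uniformly_discrete_locally_compact discrete.
- exact: uniformly_discrete_complete discrete.
- by move=> r x r_ge0; rewrite -mulrA; exact: cball_enum.
- by move=> r r_ge0; eexists => x; exact: esum_cball_le.
- exact: (geodesic b_ge0 b_le row_le connected).
Qed.
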